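(* Let $a_1,\dots,a_n\in\mathbb{F}$ be pairwise non-$(\sigma,\delta)$-conjugate, let $r_1,\dots,r_n\in\mathbb{Z}_+$ and $N=\sum_{i=1}^n r_i$. For all $b_{i,j}\in\mathbb{F}$ ($j=1,\dots,r_i$, $i=1,\dots,n$) there exists a unique $F\in\mathbb{F}[x;\sigma,\delta]$ with $\deg(F)<N$ such that $F^{(j-1)}(a_i)=b_{i,j}$ for all $j=1,\dots,r_i$ and $i=1,\dots,n$. In particular, setting $\mathbf{a}_i=(a_i,\dots,a_i)\in\mathbb{F}^{r_i}$, the $N\times N$ confluent Vandermonde matrix $V_N(\mathbf{a}_1,\dots,\mathbf{a}_n)$ is invertible.
   Context: Let $\mathbb{F}$ be a division ring, $\sigma$ a ring endomorphism and $\delta$ a $\sigma$-derivation; $\mathbb{F}[x;\sigma,\delta]$ is the skew polynomial ring with $xa=\sigma(a)x+\delta(a)$, having right Euclidean division. Elements $a,b$ are $(\sigma,\delta)$-conjugate if $b=\sigma(\beta)a\beta^{-1}+\delta(\beta)\beta^{-1}$ for some $\beta\in\mathbb{F}^*$. For $\mathbf{a}=(a_1,\dots,a_r)\in\mathbb{F}^r$ put $P_{\mathbf a}=(x-a_r)\cdots(x-a_2)(x-a_1)$. The Hasse derivative $D_{\mathbf a}(F)\in\mathbb{F}$ of $F$ is the unique element such that $F=GP_{\mathbf a}+D_{\mathbf a}(F)H$ for some $G,H$ with $H$ monic of degree $r-1$ (equivalently, the coefficient of $x^{r-1}$ in the remainder of right division of $F$ by $P_{\mathbf a}$). For $a\in\mathbb{F}$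 and $i\ge 0$, $F^{(i)}(a)=D_{(a,\dots,a)}(F)$ with $i+1$ entries. For sequences $\mathbf a_i=(a_{i,1},\dots,a_{i,r_i})$ with prefixes $\mathbf a_{i,j}=(a_{i,1},\dots,a_{i,j})$, $V_N(\mathbf a_i)$ is the $N\times r_i$ matrix with $(k,j)$ entry $D_{\mathbf a_{i,j}}(x^{k-1})$ ($k=1,\dots,N$), and $V_N(\mathbf a_1,\dots,\mathbf a_n)=(V_N(\mathbf a_1),\dots,V_N(\mathbf a_n))$. *)

From HB Require Import structures.
From mathcomp Require Import all_boot all_order all_algebra.
Set Implicit Arguments. Unset Strict Implicit. Unset Printing Implicit Defensive.
Import Order.TTheory GRing.Theory Num.Theory.
Local Open Scope ring_scope.

(* Skew polynomials over a (possibly non-commutative) ring K, in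
   K[x; sigma, delta] with x a = sigma(a) x + delta(a).
   A skew polynomial  sum_i p_i x^i  (coefficients on the LEFT) is represented
   by its coefficient list, reusing the carrier {poly K}: the additive
   structure, size (= deg + 1), coefficients p`_i, 'X^i, c%:P are those of
   {poly K}; the MULTIPLICATION is the skew one, [skmul] below (the
   commutative-style product of {poly K} is never used for skew products). *)

Section Skew.
Variables (K : unitRingType) (sigma : K -> K) (delta : K -> K).

(* left multiplication by x :  x * (sum p_i x^i) = sum (sigma(p_i) x^(i+1) + delta(p_i) x^i) *)
Definition skmulX (p : {poly K}) : {poly K} :=
  \poly_(i < (size p).+1) (sigma p`_i.-1 * (0 < i)%:R + delta p`_i).

Definition skmul (p q : {poly K}) : {poly K} :=
  \sum_(i < size p) p`_i *: iter i skmulX q.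

(* remainder of RIGHT Euclidean division of f by the monic P:
   f = G * P + R with deg R < deg P; repeatedly subtract lc(f) x^(d-r) * P. *)
Fixpoint skrem_rec (n : nat) (P f : {poly K}) : {poly K} :=
  match n with
  | 0 => f
  | n'.+1 => if (size f < size P)%N then f
             else skrem_rec n' P (f - lead_coef f *: skmul 'X^(size f - size P) P)
  end.

Definition skrem (f P : {poly K}) : {poly K} := skrem_rec (size f) P f.

(* P_a = (x - a_r) ... (x - a_2)(x - a_1) for a = [:: a_1; ...; a_r] *)
Definition Pseq (s : seq K) : {poly K} :=
  foldl (fun acc a => skmul ('X - a%:P) acc) 1 s.

Definition hasseD (s : seq K) (f : {poly K}) : K :=
  (skrem f (Pseq s))`_(size s).-1.

(* F^(i)(a) = D_{(a,...,a)}(F) with i+1 entries *)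
Definition hderiv (i : nat) (a : K) (f : {poly K}) : K := hasseD (nseq i.+1 a) f.

Definition sd_conj (a b : K) : Prop :=
  exists2 beta : K, beta != 0 &
    b = sigma beta * a * beta^-1 + delta beta * beta^-1.

(* confluent Vandermonde matrix V_N(a_1,...,a_n) with a_i = (a i, ..., a i)
   (r i entries); columns ordered block by block, within block i the column
   j = 1..r_i corresponds to the prefix a_{i,j} = (a i) repeated j times;
   row k = 1..N corresponds to x^(k-1). *)
Definition conf_cols (n : nat) (a : 'I_n -> K) (r : 'I_n -> nat) : seq (K * nat) :=
  flatten [seq [seq (a i, j.+1) | j <- iota 0 (r i)] | i <- enum 'I_n].

Definition conf_vdm (n : nat) (a : 'I_n -> K) (r : 'I_n -> nat) (N : nat)
  : 'M[K]_N :=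
  \matrix_(k < N, c < N)
     let: (ai, j) := nth (0, 0%N) (conf_cols a r) c in hasseD (nseq j ai) 'X^k.

End Skew.

From HB Require Import structures.
From mathcomp Require Import all_boot all_order all_algebra.
From mathcomp Require Import zify.
Import GRing.Theory.
Set Implicit Arguments. Unset Strict Implicit. Unset Printing Implicit Defensive.
Local Open Scope ring_scope.

(* Write P_s = (x - s_r) ... (x - s_1) and F^(j)(a) = D_{(a,...,a)}(F).
   1. Skew arithmetic: the product is bilinear and associative, a monic right
      factor adds degrees, and right division by a monic polynomial has a
      unique remainder.
   2. Hasse derivatives: D_s is left K-linear, vanishes on left multiples of
      P_s, and conversely P_s right-divides F once all D_{s_1..s_j}(F) vanish.
   3. Over a division ring, conjugacy is an equivalence, and two linear
      factors can be exchanged, (x - c^u)(x - b) = (x - b^u)(x - c) with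
      u = c - b.  This moves a root out of a block of conjugate roots, and
      yields independence: if F is right-divisible by P_s for blocks s of
      pairwise non-conjugate classes and deg F < total length, then F = 0.
   4. Uniqueness of the interpolant is independence for the blocks
      (a_i, ..., a_i); existence is an induction on the multiplicities that
      carries a monic multiple of all the P's of the right degree.
   Finally the Vandermonde matrix maps coefficient rows to derivative values;
   this map is bijective, and a bijective right multiplication is invertible. *)

Lemma prop_in_cons (T : eqType) (P : T -> Prop) (x : T) (s : seq T) :
  {in x :: s, forall y, P y} <-> P x /\ {in s, forall y, P y}.
Proof.
split=> [H | [Px H] y]; first by split=> [|y ys]; apply: H; rewrite inE ?eqxx ?ys ?orbT.
by rewrite inE => /orP [/eqP -> | /H].
Qed.

(* A square matrix A whose right multiplication on row vectors is bijective
   is invertible (over any ring): solve v_i A = e_i for the rows of a left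
   inverse W; then (A W - 1) A = 0 forces A W = 1. *)
Lemma mx_inv_of_rowmap (R : pzRingType) (N : nat) (A : 'M[R]_N) :
  (forall w : 'rV[R]_N, exists v, v *m A = w) ->
  (forall v : 'rV[R]_N, v *m A = 0 -> v = 0) ->
  exists W : 'M[R]_N, A *m W = 1%:M /\ W *m A = 1%:M.
Proof.
move=> surj inj.
have [v Hv] := fin_all_exists (fun i : 'I_N => surj (row i 1%:M)).
set W := \matrix_(i < N) v i.
have WA : W *m A = 1%:M by apply/row_matrixP => i; rewrite row_mul rowK Hv.
exists W; split=> //; apply/eqP; rewrite -subr_eq0; apply/eqP/row_matrixP => i.
by rewrite row0; apply: inj; rewrite -row_mul mulmxBl -mulmxA WA mulmx1 mul1mx subrr row0.
Qed.

Section SkewPolynomials.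
Variables (K : unitRingType) (sigma : {rmorphism K -> K}) (delta : {additive K -> K}).
Hypothesis delta_der : forall u v : K, delta (u * v) = sigma u * delta v + delta u * v.

Local Notation xmul := (skmulX sigma delta).
Local Notation "p ** q" := (skmul sigma delta p q) (at level 40, left associativity).

Lemma delta1 : delta 1 = 0.
Proof.
have := delta_der 1 1; rewrite rmorph1 !mul1r mulr1 => h.
by apply/(addrI (delta 1)); rewrite addr0 -h.
Qed.

Lemma coef_xmul (p : {poly K}) i :
  (xmul p)`_i = (if i is i'.+1 then sigma p`_i' else 0) + delta p`_i.
Proof.
rewrite /skmulX coef_poly; case: ltnP => Hi.
  by case: i Hi => [|i] _ /=; rewrite ?mulr0 ?mulr1.
rewrite nth_default ?raddf0 ?addr0; last exact: leq_trans Hi.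
by case: i Hi => [|i] //= Hi; rewrite nth_default ?rmorph0.
Qed.

Lemma xmulD (p q : {poly K}) : xmul (p + q) = xmul p + xmul q.
Proof.
apply/polyP => i; rewrite coefD !coef_xmul !coefD raddfD.
case: i => [|i]; first by rewrite !add0r.
by rewrite coefD rmorphD addrACA.
Qed.

Lemma xmul0 : xmul 0 = 0.
Proof.
apply/polyP => i; rewrite coef_xmul coef0 raddf0 addr0.
by case: i => //= i; rewrite coef0 rmorph0.
Qed.

Lemma xmul_sum I (r : seq I) (P : pred I) (F : I -> {poly K}) :
  xmul (\sum_(i <- r | P i) F i) = \sum_(i <- r | P i) xmul (F i).
Proof. by elim/big_rec2: _ => [|i x y _ <-]; rewrite ?xmul0 ?xmulD. Qed.

Lemma xmulZ c (p : {poly K}) : xmul (c *: p) = sigma c *: xmul p + delta c *: p.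
Proof.
apply/polyP => i; rewrite coefD !coefZ !coef_xmul !coefZ delta_der mulrDr addrA.
case: i => [|i]; first by rewrite mulr0 !add0r.
by rewrite coefZ rmorphM.
Qed.

Lemma xmulXn i : xmul 'X^i = 'X^(i.+1).
Proof.
apply/polyP => k; rewrite coef_xmul !coefXn.
have delta_bool (b : bool) : delta b%:R = 0 by case: b; rewrite ?raddf0 ?delta1.
case: k => [|k] /=; first by rewrite delta_bool add0r.
by rewrite coefXn delta_bool addr0 rmorph_nat eqSS.
Qed.

Lemma iter_xmulD i (p q : {poly K}) :
  iter i xmul (p + q) = iter i xmul p + iter i xmul q.
Proof. by elim: i => //= i ->; rewrite xmulD. Qed.

Lemma iter_xmul0 i : iter i xmul 0 = 0.
Proof. by elim: i => //= i ->; rewrite xmul0. Qed.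

Lemma iter_xmul1 i : iter i xmul 1 = 'X^i.
Proof. by elim: i => [|i IH] /=; rewrite ?expr0 // IH xmulXn. Qed.

Lemma skmul_widen (p q : {poly K}) m : (size p <= m)%N ->
  p ** q = \sum_(i < m) p`_i *: iter i xmul q.
Proof.
move=> Hm; rewrite /skmul (big_ord_widen _ (fun i => p`_i *: iter i xmul q) Hm).
rewrite big_mkcond; apply: eq_bigr => i _; case: ifP => // /negbT.
by rewrite -leqNgt => H; rewrite nth_default // scale0r.
Qed.

Lemma skmulDl (p q s : {poly K}) : (p + q) ** s = p ** s + q ** s.
Proof.
rewrite !(@skmul_widen _ _ (maxn (size p) (size q))) ?leq_maxl ?leq_maxr //;
  last exact: size_polyD.
by rewrite -big_split; apply: eq_bigr => i _; rewrite coefD scalerDl.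
Qed.

Lemma skmulZl c (p s : {poly K}) : (c *: p) ** s = c *: (p ** s).
Proof.
rewrite !(@skmul_widen _ _ (size p)) ?size_scale_leq // scaler_sumr.
by apply: eq_bigr => i _; rewrite coefZ scalerA.
Qed.

Lemma skmul0l (s : {poly K}) : 0 ** s = 0.
Proof. by rewrite /skmul size_poly0 big_ord0. Qed.

Lemma skmulBl (p q s : {poly K}) : (p - q) ** s = p ** s - q ** s.
Proof. by rewrite skmulDl -scaleN1r skmulZl scaleN1r. Qed.

Lemma skmul_suml I (r : seq I) (P : pred I) (F : I -> {poly K}) s :
  (\sum_(i <- r | P i) F i) ** s = \sum_(i <- r | P i) (F i ** s).
Proof. by elim/big_rec2: _ => [|i x y _ <-]; rewrite ?skmul0l ?skmulDl. Qed.

Lemma skmulXnl i (q : {poly K}) : 'X^i ** q = iter i xmul q.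
Proof.
rewrite /skmul size_polyXn big_ord_recr /= coefXn eqxx scale1r big1 ?add0r //.
by move=> j _; rewrite coefXn /= ltn_eqF ?scale0r.
Qed.

Lemma skmulCl c (q : {poly K}) : c%:P ** q = c *: q.
Proof.
have -> : c%:P = c *: 'X^0 by rewrite expr0 -mul_polyC mulr1.
by rewrite skmulZl skmulXnl.
Qed.

Lemma skmul1l (q : {poly K}) : 1 ** q = q.
Proof. by rewrite -(expr0 'X) skmulXnl. Qed.

Lemma skmulDr (p q s : {poly K}) : p ** (q + s) = p ** q + p ** s.
Proof.
by rewrite /skmul -big_split; apply: eq_bigr => i _; rewrite iter_xmulD scalerDr.
Qed.

Lemma skmul0r (p : {poly K}) : p ** 0 = 0.
Proof. by rewrite /skmul big1 // => i _; rewrite iter_xmul0 scaler0. Qed.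

Lemma skmulr1 (p : {poly K}) : p ** 1 = p.
Proof.
by rewrite /skmul; under eq_bigr do rewrite iter_xmul1; rewrite -poly_def coefK.
Qed.

(* Associativity is reduced to x (p q) = (x p) q, which holds because
   both sides are additive in p and agree on the monomials c x^i. *)
Lemma skmul_xmul (p q : {poly K}) : xmul p ** q = xmul (p ** q).
Proof.
rewrite -{1}[p]coefK poly_def xmul_sum skmul_suml {2}/skmul xmul_sum.
apply: eq_bigr => i _.
by rewrite xmulZ xmulXn skmulDl !skmulZl !skmulXnl xmulZ.
Qed.

Lemma skmulA (p q s : {poly K}) : (p ** q) ** s = p ** (q ** s).
Proof.
rewrite [p ** q]/skmul skmul_suml; apply: eq_bigr => i _.
rewrite skmulZl; congr (_ *: _).
by elim: (nat_of_ord i) => //= k IH; rewrite skmul_xmul IH.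
Qed.

Lemma skmul_XsubC e (p : {poly K}) : ('X - e%:P) ** p = xmul p - e *: p.
Proof. by rewrite skmulBl skmulCl -['X]expr1 skmulXnl. Qed.

Lemma xmul_monic (p : {poly K}) : p \is monic ->
  xmul p \is monic /\ size (xmul p) = (size p).+1.
Proof.
move=> mp; have sp : (0 < size p)%N by rewrite size_poly_gt0 monic_neq0.
have lc_sigma : sigma p`_(size p).-1 = 1 by rewrite -lead_coefE (monicP mp) rmorph1.
have S : size (xmul p) = (size p).+1.
  rewrite /skmulX size_poly_eq //= (nth_default 0 (leqnn _)) raddf0 addr0 sp.
  by rewrite mulr1 lc_sigma oner_neq0.
split=> //; apply/monicP; rewrite lead_coefE S coef_xmul /=.
rewrite (nth_default 0 (leqnn _)) raddf0 addr0.
by case: (size p) sp lc_sigma.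
Qed.

Lemma iter_xmul_monic i (q : {poly K}) : q \is monic ->
  iter i xmul q \is monic /\ size (iter i xmul q) = (size q + i)%N.
Proof.
move=> mq; elim: i => [|i [mi si]] /=; first by rewrite addn0.
by have [-> ->] := xmul_monic mi; rewrite si addnS.
Qed.

Lemma skmul_monic (p q : {poly K}) : q \is monic -> p != 0 ->
  size (p ** q) = (size p + size q).-1 /\ lead_coef (p ** q) = lead_coef p.
Proof.
move=> mq p0; have sq : (0 < size q)%N by rewrite size_poly_gt0 monic_neq0.
have [d sp] : exists d, size p = d.+1.
  by exists (size p).-1; rewrite prednK // size_poly_gt0.
have lcp : lead_coef p = p`_d by rewrite lead_coefE sp.
have [mT sT] := iter_xmul_monic d mq.
have lcd0 : p`_d != 0 by rewrite -lcp lead_coef_eq0.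
have top_size : size (p`_d *: iter d xmul q) = (size q + d)%N.
  by rewrite -mul_polyC size_Mmonic ?polyC_eq0 // size_polyC lcd0.
have top_lc : lead_coef (p`_d *: iter d xmul q) = p`_d.
  by rewrite -mul_polyC lead_coef_Mmonic // lead_coefC.
have lower_small : (size (\sum_(i < d) p`_i *: iter i xmul q)%R < size q + d)%N.
  apply: (big_ind (fun x : {poly K} => (size x < size q + d)%N)).
  - by rewrite size_poly0 addn_gt0 sq.
  - move=> x y Hx Hy; apply: leq_ltn_trans (size_polyD _ _) _.
    by rewrite gtn_max Hx Hy.
  - move=> i _; apply: leq_ltn_trans (size_scale_leq _ _) _.
    by have [_ ->] := iter_xmul_monic i mq; rewrite ltn_add2l.
rewrite (@skmul_widen _ _ d.+1) ?sp // big_ord_recr /= addrC.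
rewrite size_polyDl ?lead_coefDl ?top_size //.
by rewrite lcp top_lc addnC.
Qed.

Lemma skmul_monic_monic (p q : {poly K}) : p \is monic -> q \is monic ->
  p ** q \is monic /\ size (p ** q) = (size p + size q).-1.
Proof.
move=> mp mq; have [-> lc] := skmul_monic mq (monic_neq0 mp).
by split=> //; apply/monicP; rewrite lc (monicP mp).
Qed.

Local Notation srem := (skrem_rec sigma delta).

Lemma skrem_rec_spec (P : {poly K}) n (f : {poly K}) :
  P \is monic -> (size f <= n)%N ->
  (size (srem n P f) < size P)%N /\ exists G, f = G ** P + srem n P f.
Proof.
move=> mP; have sP : (0 < size P)%N by rewrite size_poly_gt0 monic_neq0.
elim: n f => [|n IH] f Hf /=.
  move: Hf; rewrite size_poly_leq0 => /eqP ->; split; first by rewrite size_poly0.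
  by exists 0; rewrite skmul0l addr0.
case: ifP => [small | /negbT]; first by split=> //; exists 0; rewrite skmul0l add0r.
rewrite -leqNgt => H; set d := (size f - size P)%N.
set f' := f - lead_coef f *: ('X^d ** P).
have [mM sM] : 'X^d ** P \is monic /\ size ('X^d ** P) = size f.
  by rewrite skmulXnl; have [-> ->] := iter_xmul_monic d mP; rewrite /d subnKC.
have f0 : (0 < size f)%N by apply: leq_trans H.
have Hf' : (size f' <= n)%N.
  rewrite -ltnS; apply: leq_trans Hf; rewrite -(prednK f0) ltnS.
  apply/leq_sizeP => j Hj; rewrite /f' coefB coefZ.
  have [-> | ne] := eqVneq j (size f).-1.
    by rewrite -lead_coefE -sM -lead_coefE (monicP mM) mulr1 subrr.
  have Hj2 : (size f <= j)%N by rewrite -(prednK f0) ltn_neqAle eq_sym ne Hj.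
  by rewrite !nth_default ?mulr0 ?subr0 // sM.
have [S1 [G EG]] := IH f' Hf'.
split => //; exists (G + lead_coef f *: 'X^d).
by rewrite skmulDl skmulZl addrAC -EG /f' subrK.
Qed.

Lemma skrem_spec (P f : {poly K}) : P \is monic ->
  (size (skrem sigma delta f P) < size P)%N /\
  exists G, f = G ** P + skrem sigma delta f P.
Proof. by move=> mP; apply: skrem_rec_spec. Qed.

Lemma skrem_uniq (P G R : {poly K}) : P \is monic -> (size R < size P)%N ->
  skrem sigma delta (G ** P + R) P = R.
Proof.
move=> mP sR; have [S [G' E]] := skrem_spec (G ** P + R) mP.
set R' := skrem _ _ _ _ in S E *.
have E2 : (G - G') ** P = R' - R.
  have EG : G ** P = G' ** P + (R' - R) by rewrite addrA -E addrK.
  by rewrite skmulBl EG addrC addKr.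
have [GG0 | GG] := eqVneq (G - G') 0.
  by move: E2; rewrite GG0 skmul0l => /eqP; rewrite eq_sym subr_eq0 => /eqP.
have [S2 _] := skmul_monic mP GG.
have : (size (R' - R)%R < size P)%N.
  by apply: leq_ltn_trans (size_polyD _ _) _; rewrite size_polyN gtn_max S sR.
have : (0 < size (G - G')%R)%N by rewrite size_poly_gt0.
rewrite -E2 S2; lia.
Qed.

Lemma skdiv_XsubC (e : K) (f : {poly K}) :
  exists G c, f = G ** ('X - e%:P) + c%:P.
Proof.
have [S [G E]] := skrem_spec f (monicXsubC e).
move: S; rewrite size_XsubC => /size1_polyC R.
by exists G, (skrem sigma delta f ('X - e%:P))`_0; rewrite -R.
Qed.

Local Notation Ps := (Pseq sigma delta).

Lemma Pseq_fold (s : seq K) (acc : {poly K}) :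
  foldl (fun acc a => ('X - a%:P) ** acc) acc s = Ps s ** acc.
Proof.
elim: s acc => [|a s IH] acc /=; first by rewrite skmul1l.
by rewrite IH /Pseq /= -/(Pseq _ _ _) IH skmulr1 skmulA.
Qed.

Lemma Pseq_cons a s : Ps (a :: s) = Ps s ** ('X - a%:P).
Proof. by rewrite /Pseq /= Pseq_fold skmulr1. Qed.

Lemma Pseq_rcons s a : Ps (rcons s a) = ('X - a%:P) ** Ps s.
Proof. by rewrite /Pseq foldl_rcons. Qed.

Lemma Pseq_cat s1 s2 : Ps (s1 ++ s2) = Ps s2 ** Ps s1.
Proof. by rewrite /Pseq foldl_cat Pseq_fold. Qed.

Lemma Pseq_monic s : Ps s \is monic /\ size (Ps s) = (size s).+1.
Proof.
elim/last_ind: s => [|s a [m S]]; first by rewrite /Pseq /= monic1 size_poly1.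
rewrite Pseq_rcons; have [-> ->] := skmul_monic_monic (monicXsubC a) m.
by rewrite size_XsubC S size_rcons.
Qed.

Definition rdvd (P F : {poly K}) : Prop := exists G, F = G ** P.

Lemma rdvd_mull (P F H : {poly K}) : rdvd P F -> rdvd P (H ** F).
Proof. by case=> G ->; exists (H ** G); rewrite skmulA. Qed.

Lemma rdvd_trans (P Q F : {poly K}) : rdvd P Q -> rdvd Q F -> rdvd P F.
Proof. by case=> G -> [H ->]; exists (H ** G); rewrite skmulA. Qed.

Lemma rdvd1 (F : {poly K}) : rdvd 1 F.
Proof. by exists F; rewrite skmulr1. Qed.

Lemma rdvd_nseq j m (x : K) : (j <= m)%N -> rdvd (Ps (nseq j x)) (Ps (nseq m x)).
Proof.
by move=> H; rewrite -(subnKC H) nseqD Pseq_cat; exists (Ps (nseq (m - j) x)).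
Qed.

Local Notation hD := (hasseD sigma delta).

Lemma hasseD_lin s (f g : {poly K}) c : hD s (f + c *: g) = hD s f + c * hD s g.
Proof.
have [m S] := Pseq_monic s; rewrite /hasseD.
have [Sf [Gf Ef]] := skrem_spec f m; have [Sg [Gg Eg]] := skrem_spec g m.
set Rf := skrem _ _ f _ in Sf Ef *; set Rg := skrem _ _ g _ in Sg Eg *.
have -> : f + c *: g = (Gf + c *: Gg) ** Ps s + (Rf + c *: Rg).
  by rewrite {1}Ef {1}Eg skmulDl skmulZl scalerDr addrACA.
rewrite skrem_uniq // ?coefD ?coefZ //.
apply: leq_ltn_trans (size_polyD _ _) _; rewrite gtn_max Sf /=.
exact: leq_ltn_trans (size_scale_leq _ _) Sg.
Qed.

Lemma hasseD0 s : hD s 0 = 0.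
Proof.
have := hasseD_lin s 0 0 1; rewrite scale1r addr0 mul1r => h.
by apply/(addrI (hD s 0)); rewrite -h addr0.
Qed.

Lemma hasseDD s (f g : {poly K}) : hD s (f + g) = hD s f + hD s g.
Proof. by rewrite -[g in LHS]scale1r hasseD_lin mul1r. Qed.

Lemma hasseDZ s (g : {poly K}) c : hD s (c *: g) = c * hD s g.
Proof. by rewrite -[c *: g]add0r hasseD_lin hasseD0 add0r. Qed.

Lemma hasseDB s (f g : {poly K}) : hD s (f - g) = hD s f - hD s g.
Proof. by rewrite -scaleN1r hasseD_lin mulN1r. Qed.

Lemma hasseD_sum s I (r : seq I) (P : pred I) (F : I -> {poly K}) :
  hD s (\sum_(i <- r | P i) F i) = \sum_(i <- r | P i) hD s (F i).
Proof. by elim/big_rec2: _ => [|i x y _ <-]; rewrite ?hasseD0 ?hasseDD. Qed.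

Lemma hasseD_rdvd s (f : {poly K}) : rdvd (Ps s) f -> hD s f = 0.
Proof.
case=> G ->; have [m S] := Pseq_monic s.
by rewrite /hasseD -[G ** _]addr0 skrem_uniq ?coef0 // size_poly0 S.
Qed.

Lemma rdvd_hasseD s (f : {poly K}) :
  (forall j, (0 < j <= size s)%N -> hD (take j s) f = 0) -> rdvd (Ps s) f.
Proof.
elim/last_ind: s => [|s a IH] H; first exact: rdvd1.
have [G EG] : rdvd (Ps s) f.
  apply: IH => j /andP [j0 js]; have := H j.
  rewrite j0 size_rcons -cats1 takel_cat //.
  by apply; apply: leq_trans js _.
have [G1 [c E1]] := skdiv_XsubC a G.
have [m S] := Pseq_monic s; have [m' S'] := Pseq_monic (rcons s a).
have Ef : f = G1 ** Ps (rcons s a) + c *: Ps s.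
  by rewrite EG E1 skmulDl skmulA -Pseq_rcons skmulCl.
have Dfc : hD (rcons s a) f = c.
  rewrite /hasseD Ef skrem_uniq //; last first.
    by apply: leq_ltn_trans (size_scale_leq _ _) _; rewrite S S' size_rcons.
  by rewrite coefZ size_rcons /= -[size s]/((size s).+1.-1) -S -lead_coefE (monicP m) mulr1.
have := H (size (rcons s a)); rewrite size_rcons leqnn take_oversize ?size_rcons //.
by rewrite Dfc => /(_ isT) c0; exists G1; rewrite Ef c0 scale0r addr0.
Qed.

Lemma rdvd_nseq_hasseD m (x : K) (f : {poly K}) :
  (forall j, (0 < j <= m)%N -> hD (nseq j x) f = 0) -> rdvd (Ps (nseq m x)) f.
Proof.
move=> H; apply: rdvd_hasseD => j; rewrite size_nseq => jm.
by rewrite take_nseq ?H //; case/andP: jm.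
Qed.

Section DivisionRing.
Hypothesis Kdiv : forall x : K, x != 0 -> x \is a GRing.unit.

Local Notation cj := (sd_conj sigma delta).

Definition conj_by (u a : K) : K := sigma u * a * u^-1 + delta u * u^-1.

Lemma conj_refl a : cj a a.
Proof.
exists 1; first exact: oner_neq0.
by rewrite rmorph1 delta1 invr1 !mulr1 mul1r addr0.
Qed.

Lemma delta_inv b : b \is a GRing.unit ->
  delta b^-1 = (sigma b)^-1 * - (delta b * b^-1).
Proof.
move=> ub; have us : sigma b \is a GRing.unit by apply: rmorph_unit.
have := delta_der b b^-1; rewrite mulrV // delta1 => /eqP.
by rewrite eq_sym addr_eq0 => /eqP <-; rewrite mulKr.
Qed.

Lemma conj_sym a b : cj a b -> cj b a.
Proof.
case=> be be0 Eb; have ub := Kdiv be0.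
have us : sigma be \is a GRing.unit by apply: rmorph_unit.
exists be^-1; first by rewrite invr_eq0.
rewrite invrK rmorphV // delta_inv // Eb -mulrDl -mulrDr addrK -!mulrA mulKr //.
by rewrite mulrA mulrVK.
Qed.

Lemma conj_trans a b c : cj a b -> cj b c -> cj a c.
Proof.
case=> be be0 Eb [ga ga0 Ec]; have ub := Kdiv be0; have ug := Kdiv ga0.
have ugb : ga * be \is a GRing.unit by rewrite unitrMl.
exists (ga * be); first by apply: contraTneq ugb => ->; rewrite unitr0.
rewrite Ec Eb rmorphM delta_der invrM // mulrDr !mulrDl !mulrA.
by rewrite mulrK // addrA.
Qed.

(* Moving a constant h to the left across x - a conjugates a by h. *)
Lemma XsubC_mulC (h a : K) : exists e : K,
  ('X - e%:P) ** h%:P = (sigma h)%:P ** ('X - a%:P).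
Proof.
have [-> | h0] := eqVneq h 0.
  by exists 0; rewrite skmul0r rmorph0 polyC0 skmul0l.
exists (conj_by h a); rewrite skmul_XsubC skmulCl; apply/polyP => k.
rewrite !coefB !coefZ !coef_xmul !coefB !coefX !coefC.
case: k => [|[|k]] /=;
  rewrite ?coefC /= ?subr0 ?sub0r ?mulr0 ?mulr1 ?raddf0 ?rmorph0 ?add0r ?addr0 ?mulrN //.
by rewrite /conj_by -mulrDl mulrVK ?Kdiv // opprD addrCA subrr addr0.
Qed.

Lemma XsubC_exchange (b u : K) : u != 0 ->
  ('X - (conj_by u (b + u))%:P) ** ('X - b%:P) =
  ('X - (conj_by u b)%:P) ** ('X - (b + u)%:P).
Proof.
move=> u0; have uu := Kdiv u0; set f := conj_by u b.
have fu : f * u = sigma u * b + delta u by rewrite /f /conj_by -mulrDl mulrVK.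
have -> : conj_by u (b + u) = f + sigma u.
  by rewrite /f /conj_by mulrDr mulrDl mulrK // addrAC.
rewrite !skmul_XsubC; apply/polyP => k.
rewrite !coefB !coefZ !coef_xmul !coefB !coefX !coefC.
case: k => [|[|[|k]]] /=; rewrite ?coefB ?coefX ?coefC /= ?subr0 ?sub0r ?subrr
  ?mulr0 ?mulr1 ?raddf0 ?rmorph0 ?add0r ?addr0 ?delta1 ?raddfN ?rmorphN ?mulrN
  ?opprK ?(raddfD delta) ?(rmorphD sigma) ?opprD //.
- rewrite mulrDl mulrDr fu -addrA; congr (_ + _).
  by rewrite addrCA [sigma u * b + _]addrC addKr.
- by rewrite raddfD opprD !addr0 [RHS]addrAC [LHS]addrA.
Qed.

Lemma skmul_XsubC_constP (A : {poly K}) (c k : K) :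
  A ** ('X - c%:P) = k%:P -> A = 0.
Proof.
move=> E; apply/eqP/negP => /negP A0; have [S _] := skmul_monic (monicXsubC c) A0.
have : (0 < size A)%N by rewrite size_poly_gt0.
by move: S (size_polyC_leq1 k); rewrite E size_XsubC; lia.
Qed.

Definition block_ok (B : K * seq K) : Prop := forall z, z \in B.2 -> cj B.1 z.

Lemma exchange_root (y b : K) (s : seq K) (G : {poly K}) :
  block_ok (y, s) -> ~ cj y b -> rdvd (Ps s) (G ** ('X - b%:P)) ->
  exists s', [/\ size s' = size s, block_ok (y, s') & rdvd (Ps s') G].
Proof.
elim: s b G => [|c s IH] b G ys nyb [H EH].
  by exists [::]; split=> //; exact: rdvd1.
have /prop_in_cons [yc ys'] := ys; rewrite Pseq_cons in EH.
set u := c - b; have Ec : c = b + u by rewrite /u addrC subrK.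
have u0 : u != 0 by rewrite subr_eq0; apply: contraPneq nyb => <-.
set e := conj_by u c; set f := conj_by u b.
have [G' [g E1]] := skdiv_XsubC e G.
(* With G = G' (x - e) + g, the exchange gives
   G (x - b) = G' (x - f)(x - c) + g (x - b), so that: *)
have E2 : (H ** Ps s - G' ** ('X - f%:P) - g%:P) ** ('X - c%:P) = (g * u)%:P.
  rewrite !skmulBl skmulA -EH E1 skmulDl skmulA /e Ec XsubC_exchange // -Ec.
  rewrite -skmulA !skmulCl -/f [_ ** _ + _]addrC addrK -scalerBr opprB addrC addrA.
  by rewrite subrK -polyCB scale_polyC.
have Hq := skmul_XsubC_constP E2.
have g0 : g = 0.
  move: E2; rewrite Hq skmul0l => /esym /eqP; rewrite polyC_eq0 => /eqP gu.
  by rewrite -(mulrK (Kdiv u0) g) gu mul0r.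
move: Hq E1; rewrite g0 subr0 addr0 => /eqP; rewrite subr_eq0 => /eqP EH' EG.
have nyf : ~ cj y f by move=> yf; apply/nyb/(conj_trans yf)/conj_sym; exists u.
have [s' [S' ys'' [K1 EK]]] := IH f G' ys' nyf (ex_intro _ H (esym EH')).
exists (e :: s'); split; first by rewrite /= S'.
  by apply/prop_in_cons; split=> //; apply: (conj_trans yc); exists u.
by exists K1; rewrite Pseq_cons EG EK skmulA.
Qed.

Fixpoint pairwise_nonconj (ys : seq K) : Prop :=
  if ys is y :: ys' then {in ys', forall z, ~ cj y z} /\ pairwise_nonconj ys'
  else True.

Definition blocks_ok (bs : seq (K * seq K)) : Prop := {in bs, forall B, block_ok B}.

Definition blocks_rdvd (bs : seq (K * seq K)) (F : {poly K}) : Prop :=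
  {in bs, forall B, rdvd (Ps B.2) F}.

Definition block_sizes (bs : seq (K * seq K)) : seq nat := [seq size B.2 | B <- bs].

Lemma exchange_blocks (bs : seq (K * seq K)) (b : K) (G : {poly K}) :
  blocks_ok bs -> {in bs, forall B, ~ cj B.1 b} -> blocks_rdvd bs (G ** ('X - b%:P)) ->
  exists bs', [/\ map fst bs' = map fst bs, block_sizes bs' = block_sizes bs,
                  blocks_ok bs' & blocks_rdvd bs' G].
Proof.
elim: bs => [|[y s] bs IH]; first by exists [::].
move=> /prop_in_cons [ys Hc] /prop_in_cons [nyb Hn] /prop_in_cons [Hys Hr].
have [bs' [E1 E2 C' R']] := IH Hc Hn Hr.
have [s' [S' C1 R1]] := exchange_root ys nyb Hys.
exists ((y, s') :: bs'); split => /=; [by rewrite E1 | by rewrite E2 S' | |].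
  by apply/prop_in_cons.
by apply/prop_in_cons.
Qed.

Lemma strip_head_root (y c : K) (s : seq K) (bs : seq (K * seq K)) (F : {poly K}) :
  pairwise_nonconj (y :: map fst bs) -> blocks_ok ((y, c :: s) :: bs) ->
  blocks_rdvd ((y, c :: s) :: bs) F ->
  exists G bs', [/\ F = G ** ('X - c%:P), map fst bs' = map fst bs,
     block_sizes bs' = block_sizes bs, blocks_ok ((y, s) :: bs')
     & blocks_rdvd ((y, s) :: bs') G].
Proof.
move=> [ny _] /prop_in_cons [ycs Hc] /prop_in_cons [[H EH] Hr].
rewrite /= Pseq_cons -skmulA in EH; set G := H ** Ps s in EH.
have yc : cj y c by apply: ycs; rewrite mem_head.
have Hn : {in bs, forall B, ~ cj B.1 c}.
  move=> B Bb Bc; apply: (ny B.1); first exact: map_f.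
  exact: conj_trans yc (conj_sym Bc).
have HrG : blocks_rdvd bs (G ** ('X - c%:P)) by rewrite -EH.
have [bs' [E1 E2 C' R']] := exchange_blocks Hc Hn HrG.
exists G, bs'; split=> //; apply/prop_in_cons; split=> //.
- by move=> z zs; apply: ycs; rewrite inE zs orbT.
- by exists H.
Qed.

Lemma blocks_rdvd_eq0 (ys : seq K) (bs : seq (K * seq K)) (F : {poly K}) :
  map fst bs = ys -> pairwise_nonconj ys -> blocks_ok bs -> blocks_rdvd bs F ->
  (size F <= sumn (block_sizes bs))%N -> F = 0.
Proof.
elim: ys bs F => [|y ys IH] [|[y' s] bs] F //=.
  by move=> _ _ _ _; rewrite leqn0 size_poly_eq0 => /eqP.
move=> [<- Hm] Hnc; have [_ Hnc'] := Hnc.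
elim: s bs F Hm => [|c s IHs] bs F Hm Hc Hr Hs.
  move: Hc Hr => /prop_in_cons [_ Hc'] /prop_in_cons [_ Hr'].
  exact: (IH bs F Hm Hnc' Hc' Hr').
rewrite -Hm in Hnc.
have [G [bs' [EF E1 E2 C' R']]] := strip_head_root Hnc Hc Hr.
have [G0 | G0] := eqVneq G 0; first by rewrite EF G0 skmul0l.
have [SF _] := skmul_monic (monicXsubC c) G0.
suff : G = 0 by move/eqP; rewrite (negbTE G0).
apply: (IHs bs' G (etrans E1 Hm) C' R').
by move: Hs; rewrite EF SF size_XsubC E2 /= addnS; lia.
Qed.

Definition conf_blocks (bl : seq (K * nat)) : seq (K * seq K) :=
  [seq (p.1, nseq p.2 p.1) | p <- bl].

Lemma conf_rdvd_eq0 (bl : seq (K * nat)) (F : {poly K}) :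
  pairwise_nonconj (map fst bl) ->
  {in bl, forall p, rdvd (Ps (nseq p.2 p.1)) F} ->
  (size F <= sumn (map snd bl))%N -> F = 0.
Proof.
move=> Hn Hr Hs; apply: (@blocks_rdvd_eq0 (map fst bl) (conf_blocks bl)) => //.
- by rewrite /conf_blocks -map_comp.
- move=> B /mapP [p _ ->] z /=; rewrite mem_nseq => /andP [_ /eqP ->].
  exact: conj_refl.
- by move=> B /mapP [p pb ->]; apply: Hr.
- by rewrite /block_sizes /conf_blocks -map_comp (eq_map (g := snd)) // => p /=;
    rewrite size_nseq.
Qed.

(* Existence of interpolants is proved by induction on the multiplicities,
   together with a monic "annihilator" Q of degree sum m_i right-divisible
   by every P_{x_i^m_i}: raising m to m + 1 at x adds a multiple of Q. *)
Definition annihilator (bl : seq (K * nat)) (Q : {poly K}) : Prop :=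
  [/\ Q \is monic, size Q = (sumn (map snd bl)).+1
    & {in bl, forall p, rdvd (Ps (nseq p.2 p.1)) Q}].

Definition interpolating (bl : seq (K * nat)) : Prop :=
  forall t : K -> nat -> K, exists F : {poly K},
    (size F <= sumn (map snd bl))%N /\
    {in bl, forall p, forall j, (0 < j <= p.2)%N -> hD (nseq j p.1) F = t p.1 j}.

(* P_{x^(m+1)} = (x - x) P_{x^m}; a left factor x - e (e a conjugate of x)
   turns an annihilator for (x, m) into one for (x, m + 1). *)
Lemma annihilator_step (x : K) (m : nat) (bl : seq (K * nat)) (Q : {poly K}) :
  annihilator ((x, m) :: bl) Q ->
  exists e, annihilator ((x, m.+1) :: bl) (('X - e%:P) ** Q).
Proof.
move=> [mQ SQ /prop_in_cons [[H EH] DQ]].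
have [H' [h EH']] := skdiv_XsubC x H.
have [e He] := XsubC_mulC h x.
have [mQ1 SQ1] := skmul_monic_monic (monicXsubC e) mQ.
exists e; split => //; first by rewrite SQ1 size_XsubC SQ.
apply/prop_in_cons; split => [|p pb]; last exact/rdvd_mull/DQ.
exists (('X - e%:P) ** H' + (sigma h)%:P).
rewrite EH /= -skmulA EH' skmulDr He -skmulA -skmulDl.
have -> : x :: nseq m x = rcons (nseq m x) x by rewrite -cats1 -(nseqD m 1) addn1.
by rewrite Pseq_rcons skmulA.
Qed.

(* D_{x^(m+1)} does not vanish on an annihilator for (x, m): otherwise it
   would be right-divisible by P_{x^(m+1)} and zero by independence. *)
Lemma annihilator_hasseD_neq0 (x : K) (m : nat) (bl : seq (K * nat)) (Q : {poly K}) :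
  pairwise_nonconj (x :: map fst bl) -> annihilator ((x, m) :: bl) Q ->
  hD (nseq m.+1 x) Q != 0.
Proof.
move=> Hnc [mQ SQ /prop_in_cons [DQx DQ]]; apply/eqP => DQ0.
have DQx' : rdvd (Ps (nseq m.+1 x)) Q.
  apply: rdvd_nseq_hasseD => j /andP [j0]; rewrite leq_eqVlt => /orP [/eqP -> //|].
  by rewrite ltnS => jm; apply/hasseD_rdvd/(rdvd_trans _ DQx)/rdvd_nseq.
suff Q0 : Q = 0 by move: (monic_neq0 mQ); rewrite Q0 eqxx.
by apply: (@conf_rdvd_eq0 ((x, m.+1) :: bl)) => //; [apply/prop_in_cons | rewrite SQ].
Qed.

(* Correct the interpolant for (x, m) by a multiple of the annihilator, which
   keeps all the old derivative values and adjusts D_{x^(m+1)}. *)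
Lemma interpolating_step (x : K) (m : nat) (bl : seq (K * nat)) (Q : {poly K}) :
  annihilator ((x, m) :: bl) Q -> hD (nseq m.+1 x) Q != 0 ->
  interpolating ((x, m) :: bl) -> interpolating ((x, m.+1) :: bl).
Proof.
move=> [_ SQ DQ] DQ0 HE t; have [F0 [SF0 HF0]] := HE t.
set D := hD (nseq m.+1 x) in DQ0 *.
set lam := (t x m.+1 - D F0) * (D Q)^-1.
exists (F0 + lam *: Q); split.
  apply: leq_trans (size_polyD _ _) _; rewrite geq_max /=.
  apply/andP; split; first by apply: leq_trans SF0 _; rewrite /= leqnSn.
  by apply: leq_trans (size_scale_leq _ _) _; rewrite SQ.
have old : {in (x, m) :: bl, forall p, forall j, (0 < j <= p.2)%N ->
    hD (nseq j p.1) (F0 + lam *: Q) = t p.1 j}.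
  move=> p pb j Hj; rewrite hasseD_lin HF0 // hasseD_rdvd ?mulr0 ?addr0 //.
  by apply/(rdvd_trans _ (DQ _ pb))/rdvd_nseq; case/andP: Hj.
apply/prop_in_cons; split => [j /andP [j0] /= |p pb]; last first.
  by apply: old; rewrite inE pb orbT.
rewrite leq_eqVlt ltnS => /orP [/eqP -> | jm].
  by rewrite hasseD_lin -/D mulrVK ?Kdiv // addrC subrK.
by apply: (old (x, m) (mem_head _ _)); rewrite j0.
Qed.

Lemma hermite_exists (bl : seq (K * nat)) :
  pairwise_nonconj (map fst bl) -> (exists Q, annihilator bl Q) /\ interpolating bl.
Proof.
elim: bl => [|[x m] bl IH] /=.
  by split; [exists 1; split; rewrite ?monic1 ?size_poly1 | exists 0; rewrite size_poly0].
move=> Hnc; have [[Q [mQ SQ DQ]] HE] := IH Hnc.2; elim: m => [|m [[Q1 HQ1] HE1]].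
  split; first by exists Q; split=> //; apply/prop_in_cons; split=> //; exact: rdvd1.
  move=> t; have [F [SF HF]] := HE t; exists F; split => //.
  by apply/prop_in_cons; split => // j; rewrite andbC leqn0 => /andP [/eqP ->].
have [e He] := annihilator_step HQ1.
split; first by exists (('X - e%:P) ** Q1).
exact: interpolating_step HQ1 (annihilator_hasseD_neq0 Hnc HQ1) HE1.
Qed.

End DivisionRing.
End SkewPolynomials.

Section ConfluentVandermonde.
Variables (K : unitRingType) (sigma : {rmorphism K -> K}) (delta : {additive K -> K}).
Hypothesis delta_der : forall u v : K, delta (u * v) = sigma u * delta v + delta u * v.
Hypothesis Kdiv : forall x : K, x != 0 -> x \is a GRing.unit.
Variables (n : nat) (a : 'I_n -> K) (r : 'I_n -> nat) (N : nat).
Hypothesis a_nc : forall i j : 'I_n, i != j -> ~ sd_conj sigma delta (a i) (a j).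
Hypothesis HN : N = (\sum_(i < n) r i)%N.

Local Notation hD := (hasseD sigma delta).

Let bl : seq (K * nat) := [seq (a i, r i) | i <- enum 'I_n].

Lemma a_inj : injective a.
Proof.
move=> i j E; apply/eqP/negPn/negP => ne; apply: (a_nc ne).
by rewrite E; apply: conj_refl.
Qed.

Lemma bl_nonconj : pairwise_nonconj sigma delta (map fst bl).
Proof.
rewrite /bl -map_comp; move: (enum_uniq 'I_n).
elim: (enum _) => //= i s IH /andP [ni us]; split; last exact: IH.
move=> z /mapP [j js ->]; apply: a_nc; apply: contraNneq ni => ->; exact: js.
Qed.

Lemma bl_size : sumn (map snd bl) = N.
Proof. by rewrite HN /bl -map_comp sumnE big_map big_enum. Qed.

Lemma bl_mem i : (a i, r i) \in bl.
Proof. by apply: map_f; rewrite mem_enum. Qed.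

Lemma hermite_unique (F : {poly K}) : (size F <= N)%N ->
  (forall i j, (j < r i)%N -> hderiv sigma delta j (a i) F = 0) -> F = 0.
Proof.
move=> SF HF; apply: (conf_rdvd_eq0 delta_der Kdiv bl_nonconj); last by rewrite bl_size.
move=> p /mapP [i _ ->] /=; apply: rdvd_nseq_hasseD => // j /andP [j0 jr].
by have := HF i j.-1; rewrite /hderiv prednK // => /(_ jr).
Qed.

Lemma hermite_interpolation (b : 'I_n -> nat -> K) :
  exists! f : {poly K}, (size f <= N)%N /\
    forall (i : 'I_n) (j : nat), (j < r i)%N -> hderiv sigma delta j (a i) f = b i j.
Proof.
pose t (x : K) (j : nat) := if [pick i | a i == x] is Some i then b i j.-1 else 0.
have [_ /(_ t) [F [SF HF]]] := hermite_exists delta_der Kdiv bl_nonconj.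
have HFb i j : (j < r i)%N -> hderiv sigma delta j (a i) F = b i j.
  move=> ji; rewrite /hderiv (HF _ (bl_mem i)) /= ?ji // /t.
  case: pickP => [i' /eqP Ei | Hn]; first by rewrite (a_inj Ei).
  by move: (Hn i); rewrite eqxx.
rewrite bl_size in SF; exists F; split=> // F' [SF' HF'].
apply: subr0_eq; apply: hermite_unique.
  by apply: leq_trans (size_polyD _ _) _; rewrite size_polyN geq_max SF.
by move=> i j ji; rewrite /hderiv hasseDB -!/(hderiv _ _ _ _ _) HFb // HF' // subrr.
Qed.

Local Notation cs := (conf_cols a r).
Local Notation V := (conf_vdm sigma delta a r N).

Lemma conf_cols_mem q : q \in cs -> exists i j, (j < r i)%N /\ q = (a i, j.+1).
Proof.
move=> /allpairsPdep [i [j [_ ji ->]]]; exists i, j; split => //.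
by move: ji; rewrite mem_iota.
Qed.

Lemma conf_cols_in i j : (j < r i)%N -> (a i, j.+1) \in cs.
Proof. by move=> ji; apply/allpairsPdep; exists i, j; rewrite mem_enum mem_iota. Qed.

Lemma conf_cols_uniq : uniq cs.
Proof.
apply: allpairs_uniq_dep => [||[i j] [i' j'] _ _ /= [/a_inj E1 ->]]; last by rewrite E1.
  exact: enum_uniq.
by move=> i _; exact: iota_uniq.
Qed.

Lemma conf_cols_size : size cs = N.
Proof.
rewrite size_flatten /shape -map_comp -bl_size /bl -map_comp.
by congr sumn; apply: eq_map => i /=; rewrite size_map size_iota.
Qed.

Lemma conf_vdm_rowE (F : {poly K}) (c : 'I_N) : (size F <= N)%N ->
  (poly_rV F *m V) 0 c = let: (x, j) := nth (0, 0%N) cs c in hD (nseq j x) F.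
Proof.
move=> SF; have EF : F = \sum_(k < N) F`_k *: 'X^k.
  rewrite -poly_def; apply/polyP => i; rewrite coef_poly; case: ltnP => // H.
  by rewrite nth_default //; apply: leq_trans H.
rewrite mxE; under eq_bigr => k _ do rewrite !mxE.
case: (nth (0, 0%N) cs c) => x j; rewrite [in RHS]EF hasseD_sum.
by apply: eq_bigr => k _; rewrite hasseDZ.
Qed.

(* Injectivity and surjectivity of v |-> v V_N, by uniqueness and existence
   of interpolants. *)
Lemma conf_vdm_inj (v : 'rV[K]_N) : v *m V = 0 -> v = 0.
Proof.
move=> vV0; rewrite -[v]rVpolyK; set F := rVpoly v.
have SF : (size F <= N)%N by apply: size_poly.
suff -> : F = 0 by apply/rowP => k; rewrite !mxE coef0.
apply: hermite_unique => // i j ji.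
have ic : (index (a i, j.+1) cs < N)%N by rewrite -conf_cols_size index_mem conf_cols_in.
have := conf_vdm_rowE (Ordinal ic) SF; rewrite /= nth_index ?conf_cols_in //.
by rewrite rVpolyK vV0 mxE.
Qed.

Lemma conf_vdm_surj (w : 'rV[K]_N) : exists v, v *m V = w.
Proof.
pose col (c : 'I_N) := nth (0, 0%N) cs c.
have col_inj : injective col.
  by move=> c c' /eqP; rewrite nth_uniq ?conf_cols_size ?conf_cols_uniq // => /eqP/val_inj.
pose b i j := if [pick c | col c == (a i, j.+1)] is Some c then w 0 c else 0.
have [F [[SF HF] _]] := hermite_interpolation b.
exists (poly_rV F); apply/rowP => c; rewrite conf_vdm_rowE //.
have cN : (c < size cs)%N by rewrite conf_cols_size.
have [i [j [ji Ec]]] := conf_cols_mem (mem_nth (0, 0%N) cN).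
rewrite Ec -/(hderiv sigma delta j (a i) F) HF // /b.
case: pickP => [c' /eqP Ec' | /(_ c)]; last by rewrite /col Ec eqxx.
by rewrite (col_inj c' c) // Ec'.
Qed.

End ConfluentVandermonde.

Theorem mainTheorem9
  (K : unitRingType)
  (Kdiv : forall x : K, x != 0 -> x \is a GRing.unit)
  (sigma : {rmorphism K -> K})
  (delta : {additive K -> K})
  (delta_der : forall u v : K, delta (u * v) = sigma u * delta v + delta u * v)
  (n : nat) (a : 'I_n -> K)
  (a_nc : forall i j : 'I_n, i != j -> ~ sd_conj sigma delta (a i) (a j))
  (r : 'I_n -> nat) (r_pos : forall i, (0 < r i)%N)
  (N : nat) (HN : N = (\sum_(i < n) r i)%N) :
  (forall b : 'I_n -> nat -> K,
     exists! f : {poly K}, (size f <= N)%N /\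
       forall (i : 'I_n) (j : nat), (j < r i)%N ->
         hderiv sigma delta j (a i) f = b i j)
  /\
  (exists W : 'M[K]_N,
     conf_vdm sigma delta a r N *m W = 1%:M /\
     W *m conf_vdm sigma delta a r N = 1%:M).
Proof.
split; first exact: hermite_interpolation.
apply: mx_inv_of_rowmap; first exact: conf_vdm_surj.
exact: conf_vdm_inj.
Qed.
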